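(* Let $x$ be a Bertrand D-curve and $x_1$ a Bertrand partner D-curve of $x$. Then: (i) if $x$ is a geodesic curve, the geodesic torsion of $x_1$ is $\tau_{g_1} = \tau_g\cos\theta\,[\cos\theta - \lambda\tau_g\sin\theta]\left(\dfrac{ds}{ds_1}\right)^2$; (ii) if $x$ is a principal line, then $\tau_{g_1} = k_g(1+\lambda k_g)\sin\theta\cos\theta\left(\dfrac{ds}{ds_1}\right)^2$.
   Context: For a unit-speed curve $x(s)$ on an oriented surface $S\subset\mathbb{E}^3$, the Darboux frame is $\{T,g,n\}$ ($T$ unit tangent, $n$ unit surface normal along the curve, $g=n\times T$), with $\dot T = k_g g + k_n n$, $\dot g = -k_g T + \tau_g n$, $\dot n = -k_n T - \tau_g g$; $k_g,k_n,\tau_g$ are the geodesic curvature, normal curvature and geodesic torsion. For $x_1(s_1)$ on an oriented surface $S_1$ the analogous objects carry subscript $1$. $x$ is a Bertrand D-curve with Bertrand partner D-curve $x_1$ if there is a correspondence of points such that at corresponding points $g$ coincides with $g_1$; then $x(s)=x_1(s_1)+\lambda g_1(s_1)$ with $\lambda$ a nonzero constant, and $s$ is a function of $s_1$. $\theta$ is the angle between $T$ and $T_1$, oriented so that $T_1=\cos\theta\,T+\sin\theta\,n$, $n_1=-\sin\theta\,T+\cos\theta\,n$. Geodesic means $k_g=0$; principal line means $\tau_g=0$. *)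

From Stdlib Require Import Reals.
From Coquelicot Require Import Coquelicot.
Open Scope R_scope.

Definition V3 : Type := ((R * R) * R)%type.

Definition mkV3 (a b c : R) : V3 := ((a, b), c).

Definition lc2 (a : R) (u : V3) (b : R) (v : V3) : V3 :=
  plus (scal a u) (scal b v).

Definition dot (u v : V3) : R :=
  let '((u1, u2), u3) := u in let '((v1, v2), v3) := v in
  u1 * v1 + u2 * v2 + u3 * v3.

Definition cross (u v : V3) : V3 :=
  let '((u1, u2), u3) := u in let '((v1, v2), v3) := v in
  mkV3 (u2 * v3 - u3 * v2) (u3 * v1 - u1 * v3) (u1 * v2 - u2 * v1).

(* A unit-speed curve x(s), s in the open interval (a,b), on an oriented
   surface, with its Darboux frame {T, g, n} (n = unit surface normal along
   the curve, g = n x T) and geodesic curvature kg, normal curvature kn,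
   geodesic torsion tg, given by the Darboux equations. *)
Definition darboux_curve (a b : R) (x T g n : R -> V3) (kg kn tg : R -> R) : Prop :=
  forall s, a < s < b ->
    is_derive x s (T s) /\
    dot (T s) (T s) = 1 /\ dot (n s) (n s) = 1 /\ dot (T s) (n s) = 0 /\
    g s = cross (n s) (T s) /\
    is_derive T s (lc2 (kg s) (g s) (kn s) (n s)) /\
    is_derive g s (lc2 (- kg s) (T s) (tg s) (n s)) /\
    is_derive n s (lc2 (- kn s) (T s) (- tg s) (g s)).

(* Differentiating the two defining relations of the correspondence, g(phi s1) = g1(s1)
   and x(phi s1) = x1(s1) + lambda g1(s1), and taking components in the Darboux frames
   gives, with p = phi'(s1),
     tg1 = p (kg sin theta + tg cos theta),  cos theta = p (1 + lambda kg),
     sin theta = - lambda p tg.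
   For a principal line (tg = 0) the last relation forces sin theta = 0, so both sides of
   (ii) vanish; for a geodesic (kg = 0) the first two give tg1 = p tg cos theta, and (i)
   follows from p^2 (1 + lambda^2 tg^2) = cos^2 theta + sin^2 theta = 1. *)
From Stdlib Require Import Reals Lra.
From Coquelicot Require Import Coquelicot.
Open Scope R_scope.

Lemma dot_sym (u v : V3) : dot u v = dot v u.
Proof. destruct u as [[u1 u2] u3], v as [[v1 v2] v3]; cbn; ring. Qed.

Lemma dot_plusl (u v w : V3) : dot (plus u v) w = dot u w + dot v w.
Proof. destruct u as [[u1 u2] u3], v as [[v1 v2] v3], w as [[w1 w2] w3]; cbn; ring. Qed.

Lemma dot_scall (k : R) (u w : V3) : dot (scal k u) w = k * dot u w.
Proof. destruct u as [[u1 u2] u3], w as [[w1 w2] w3]; cbn; ring. Qed.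

Lemma dot_lc2l (a : R) (u : V3) (b : R) (v w : V3) :
  dot (lc2 a u b v) w = a * dot u w + b * dot v w.
Proof. unfold lc2; rewrite dot_plusl, !dot_scall; ring. Qed.

Lemma dot_lc2r (a : R) (u : V3) (b : R) (v w : V3) :
  dot w (lc2 a u b v) = a * dot w u + b * dot w v.
Proof. rewrite dot_sym, dot_lc2l, (dot_sym u), (dot_sym v); ring. Qed.

Section ProductDerivative.

Context {U W : NormedModule R_AbsRing}.

Lemma is_derive_fst (f : R -> U * W) (s : R) (l : U * W) :
  is_derive f s l -> is_derive (fun t => fst (f t)) s (fst l).
Proof.
  intros Df; apply (filterdiff_comp' f fst s _ fst Df).
  apply filterdiff_linear, is_linear_fst.
Qed.

Lemma is_derive_snd (f : R -> U * W) (s : R) (l : U * W) :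
  is_derive f s l -> is_derive (fun t => snd (f t)) s (snd l).
Proof.
  intros Df; apply (filterdiff_comp' f snd s _ snd Df).
  apply filterdiff_linear, is_linear_snd.
Qed.

End ProductDerivative.

Lemma is_derive_scal_r {V : NormedModule R_AbsRing} (f : R -> V) (s k : R) (l : V) :
  is_derive f s l -> is_derive (fun t => scal k (f t)) s (scal k l).
Proof.
  intros Df.
  eapply filterdiff_ext_lin.
  - apply (filterdiff_scal_r_fct k f _ Rmult_comm Df).
  - intros y; cbn; rewrite !scal_assoc; f_equal; apply Rmult_comm.
Qed.

Lemma is_derive_V3_unique (f : R -> V3) (s : R) (l m : V3) :
  is_derive f s l -> is_derive f s m -> l = m.
Proof.
  destruct l as [[l1 l2] l3], m as [[m1 m2] m3]; intros Dl Dm.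
  assert (E1 := is_derive_unique _ _ _ (is_derive_fst _ _ _ (is_derive_fst _ _ _ Dl))).
  assert (F1 := is_derive_unique _ _ _ (is_derive_fst _ _ _ (is_derive_fst _ _ _ Dm))).
  assert (E2 := is_derive_unique _ _ _ (is_derive_snd _ _ _ (is_derive_fst _ _ _ Dl))).
  assert (F2 := is_derive_unique _ _ _ (is_derive_snd _ _ _ (is_derive_fst _ _ _ Dm))).
  assert (E3 := is_derive_unique _ _ _ (is_derive_snd _ _ _ Dl)).
  assert (F3 := is_derive_unique _ _ _ (is_derive_snd _ _ _ Dm)).
  cbn in *; congruence.
Qed.

Lemma is_derive_comp_eq_loc (f h : R -> V3) (phi : R -> R) (s : R) (l m : V3) :
  locally s (fun t => f (phi t) = h t) ->
  is_derive f (phi s) l -> ex_derive phi s -> is_derive h s m ->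
  scal (Derive phi s) l = m.
Proof.
  intros Efh Df Dphi Dh.
  apply (is_derive_V3_unique (fun t => f (phi t)) s).
  - exact (is_derive_comp f phi s _ _ Df (Derive_correct _ _ Dphi)).
  - exact (is_derive_ext_loc h _ s m (filter_imp _ _ (fun t E => eq_sym E) Efh) Dh).
Qed.

Lemma locally_open_interval (a b s : R) (P : R -> Prop) :
  a < s < b -> (forall t, a < t < b -> P t) -> locally s P.
Proof.
  intros [Has Hsb] HP.
  apply (locally_interval P s a b Has Hsb); intros t Hat Htb; exact (HP t (conj Hat Htb)).
Qed.

Lemma darboux_frame_orthonormal (a b : R) (x T g n : R -> V3) (kg kn tg : R -> R) (s : R) :
  darboux_curve a b x T g n kg kn tg -> a < s < b ->
  dot (T s) (T s) = 1 /\ dot (n s) (n s) = 1 /\ dot (T s) (n s) = 0 /\ dot (n s) (T s) = 0.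
Proof.
  intros D Hs; destruct (D s Hs) as (_ & TT & NN & TN & _).
  rewrite (dot_sym (n s) (T s)); auto.
Qed.

Section BertrandPartner.

Context {a b a1 b1 lambda s1 : R}.
Context {x T g n x1 T1 g1 n1 : R -> V3} {kg kn tg kg1 kn1 tg1 phi theta : R -> R}.

Hypothesis curve : darboux_curve a b x T g n kg kn tg.
Hypothesis partner : darboux_curve a1 b1 x1 T1 g1 n1 kg1 kn1 tg1.
Hypothesis correspondence : forall t, a1 < t < b1 ->
  a < phi t < b /\ ex_derive phi t /\
  g (phi t) = g1 t /\
  x (phi t) = plus (x1 t) (scal lambda (g1 t)) /\
  T1 t = lc2 (cos (theta t)) (T (phi t)) (sin (theta t)) (n (phi t)) /\
  n1 t = lc2 (- sin (theta t)) (T (phi t)) (cos (theta t)) (n (phi t)).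
Hypothesis s1_in : a1 < s1 < b1.

Lemma phi_in : a < phi s1 < b.
Proof. apply (correspondence s1 s1_in). Qed.

Lemma derive_g_match :
  scal (Derive phi s1) (lc2 (- kg (phi s1)) (T (phi s1)) (tg (phi s1)) (n (phi s1)))
  = lc2 (- kg1 s1) (T1 s1) (tg1 s1) (n1 s1).
Proof.
  destruct (correspondence s1 s1_in) as (Hphi & Dphi & _).
  destruct (curve _ Hphi) as (_ & _ & _ & _ & _ & _ & Dg & _).
  destruct (partner _ s1_in) as (_ & _ & _ & _ & _ & _ & Dg1 & _).
  apply (is_derive_comp_eq_loc g g1 phi s1 _ _); [| exact Dg | exact Dphi | exact Dg1].
  apply (locally_open_interval a1 b1 s1 _ s1_in); intros t Ht; apply (correspondence t Ht).
Qed.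

Lemma derive_x_match :
  scal (Derive phi s1) (T (phi s1))
  = plus (T1 s1) (scal lambda (lc2 (- kg1 s1) (T1 s1) (tg1 s1) (n1 s1))).
Proof.
  destruct (correspondence s1 s1_in) as (Hphi & Dphi & _).
  destruct (curve _ Hphi) as (Dx & _).
  destruct (partner _ s1_in) as (Dx1 & _ & _ & _ & _ & _ & Dg1 & _).
  apply (is_derive_comp_eq_loc x (fun t => plus (x1 t) (scal lambda (g1 t))) phi s1 _ _);
    [| exact Dx | exact Dphi |].
  - apply (locally_open_interval a1 b1 s1 _ s1_in); intros t Ht; apply (correspondence t Ht).
  - exact (is_derive_plus _ _ s1 _ _ Dx1 (is_derive_scal_r g1 s1 lambda _ Dg1)).
Qed.

Lemma geodesic_torsion_relation :
  tg1 s1 = Derive phi s1 * (kg (phi s1) * sin (theta s1) + tg (phi s1) * cos (theta s1)).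
Proof.
  destruct (correspondence s1 s1_in) as (Hphi & _ & _ & _ & _ & Hn1).
  destruct (darboux_frame_orthonormal _ _ _ _ _ _ _ _ _ _ curve Hphi) as (TT & NN & TN & NT).
  destruct (darboux_frame_orthonormal _ _ _ _ _ _ _ _ _ _ partner s1_in) as (_ & NN1 & TN1 & _).
  assert (E := f_equal (fun v => dot v (n1 s1)) derive_g_match); cbv beta in E.
  rewrite dot_scall, !dot_lc2l, NN1, TN1, Hn1, !dot_lc2r, TT, TN, NT, NN in E.
  lra.
Qed.

Lemma cos_relation : cos (theta s1) = Derive phi s1 * (1 + lambda * kg (phi s1)).
Proof.
  destruct (correspondence s1 s1_in) as (Hphi & _ & _ & _ & HT1 & _).
  destruct (darboux_frame_orthonormal _ _ _ _ _ _ _ _ _ _ curve Hphi) as (TT & NN & TN & NT).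
  assert (E := f_equal (fun v => dot v (T (phi s1))) derive_x_match); cbv beta in E.
  rewrite <- derive_g_match, HT1, dot_plusl, !dot_scall, !dot_lc2l, TT, NT in E.
  lra.
Qed.

Lemma sin_relation : sin (theta s1) = - lambda * Derive phi s1 * tg (phi s1).
Proof.
  destruct (correspondence s1 s1_in) as (Hphi & _ & _ & _ & HT1 & _).
  destruct (darboux_frame_orthonormal _ _ _ _ _ _ _ _ _ _ curve Hphi) as (TT & NN & TN & NT).
  assert (E := f_equal (fun v => dot v (n (phi s1))) derive_x_match); cbv beta in E.
  rewrite <- derive_g_match, HT1, dot_plusl, !dot_scall, !dot_lc2l, TN, NN in E.
  lra.
Qed.

Lemma partner_torsion_of_geodesic :
  kg (phi s1) = 0 ->
  tg1 s1 = tg (phi s1) * cos (theta s1)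
           * (cos (theta s1) - lambda * tg (phi s1) * sin (theta s1))
           * (Derive phi s1) ^ 2.
Proof.
  intros kg0.
  assert (unit_tangent : (Derive phi s1) ^ 2 * (1 + (lambda * tg (phi s1)) ^ 2) = 1).
  { rewrite <- (sin2_cos2 (theta s1)) at 2.
    rewrite sin_relation, cos_relation, kg0; unfold Rsqr; ring. }
  rewrite geodesic_torsion_relation, sin_relation, cos_relation, kg0.
  set (p := Derive phi s1) in *; set (t := tg (phi s1)) in *.
  transitivity (t * p ^ 2 * (p ^ 2 * (1 + (lambda * t) ^ 2))).
  - rewrite unit_tangent; ring.
  - ring.
Qed.

Lemma partner_torsion_of_principal_line :
  tg (phi s1) = 0 ->
  tg1 s1 = kg (phi s1) * (1 + lambda * kg (phi s1))
           * sin (theta s1) * cos (theta s1) * (Derive phi s1) ^ 2.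
Proof.
  intros tg0; rewrite geodesic_torsion_relation, sin_relation, tg0; ring.
Qed.

End BertrandPartner.

Theorem corollary4
  (a b a1 b1 : R)
  (x T g n : R -> V3) (kg kn tg : R -> R)
  (x1 T1 g1 n1 : R -> V3) (kg1 kn1 tg1 : R -> R)
  (phi : R -> R) (lambda : R) (theta : R -> R) :
  darboux_curve a b x T g n kg kn tg ->
  darboux_curve a1 b1 x1 T1 g1 n1 kg1 kn1 tg1 ->
  lambda <> 0 ->
  (forall s1, a1 < s1 < b1 ->
     a < phi s1 < b /\ ex_derive phi s1 /\
     g (phi s1) = g1 s1 /\
     x (phi s1) = plus (x1 s1) (scal lambda (g1 s1)) /\
     T1 s1 = lc2 (cos (theta s1)) (T (phi s1)) (sin (theta s1)) (n (phi s1)) /\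
     n1 s1 = lc2 (- sin (theta s1)) (T (phi s1)) (cos (theta s1)) (n (phi s1))) ->
  ((forall s, a < s < b -> kg s = 0) ->
     forall s1, a1 < s1 < b1 ->
       tg1 s1 = tg (phi s1) * cos (theta s1)
                * (cos (theta s1) - lambda * tg (phi s1) * sin (theta s1))
                * (Derive phi s1) ^ 2)
  /\
  ((forall s, a < s < b -> tg s = 0) ->
     forall s1, a1 < s1 < b1 ->
       tg1 s1 = kg (phi s1) * (1 + lambda * kg (phi s1))
                * sin (theta s1) * cos (theta s1) * (Derive phi s1) ^ 2).
Proof.
  (* The argument does not need lambda <> 0. *)
  intros curve partner _ correspondence; split.
  - intros geodesic s1 s1_in.
    apply (partner_torsion_of_geodesic curve partner correspondence s1_in).
    exact (geodesic _ (phi_in correspondence s1_in)).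
  - intros principal_line s1 s1_in.
    apply (partner_torsion_of_principal_line curve partner correspondence s1_in).
    exact (principal_line _ (phi_in correspondence s1_in)).
Qed.
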